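(* Let $t \in \mathsf{Topo}$ and let $P = \{pkt_1, \dots, pkt_{|t|}\} \subseteq \mathsf{Pkt}$ be a set of $|t|$ distinct packets. For each permutation $\pi$ of $P$ there exists a well-formed PIFO tree $q_\pi \in \mathsf{PIFOTree}(t)$ such that $\mathsf{flush}(q_\pi) = \pi(pkt_{|t|}) \cdots \pi(pkt_1)$ and $\mathsf{snap}(q_\pi)$ is the list $[pkt_1, \dots, pkt_{|t|}]$ of one-letter words (i.e., the $i$-th leaf from the left holds exactly the packet $pkt_i$).
   Context: Fix a set $\mathsf{Pkt}$ of packets and a totally ordered set $\mathsf{Rk}$ of ranks (smaller is more favorable). PIFOs: for a set $S$, a PIFO over $S$ is a finite sequence of pairs $(s,r)\in S\times\mathsf{Rk}$ in insertion order; $\mathsf{PIFO}(S)$ is the set of these. $\mathsf{pop}_{\mathsf{PIFO}}(p)$ is undefined if $p$ is empty; otherwise it removes the entry of minimal rank (earliest-inserted among ties) and returns $(s,p')$. $|p|$ is the number of entries, $|p|_s$ the number with element $s$. Topologies: $\mathsf{Topo}$ is the smallest set with $*\in\mathsf{Topo}$ and $\mathsf{Node}(\vec t)\in\mathsf{Topo}$ for $n\in\mathbb{N}$, $\vec t\in\mathsf{Topo}^n$. Number of leaves: $|*|=1$, $|\mathsf{Node}(\vec t)|=\sum_i|\vec t[i]|$. PIFO trees: $\mathsf{Leaf}(p)\in\mathsf{PIFOTree}( * )$ for $p\in\mathsf{PIFO}(\mathsf{Pkt})$; $\mathsf{Internal}(\vec q,p)\in\mathsf{PIFOTree}(\mathsf{Node}(\vec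 t))$ whenever $\vec t\in\mathsf{Topo}^n$, $p\in\mathsf{PIFO}(\{1,\dots,n\})$, $\vec q[i]\in\mathsf{PIFOTree}(\vec t[i])$. $\vec q[q'/i]$ replaces the $i$-th entry by $q'$. pop (partial): $\mathsf{pop}(\mathsf{Leaf}(p))=(pkt,\mathsf{Leaf}(p'))$ if $\mathsf{pop}_{\mathsf{PIFO}}(p)=(pkt,p')$; $\mathsf{pop}(\mathsf{Internal}(\vec q,p))=(pkt,\mathsf{Internal}(\vec q[q'/i],p'))$ if $\mathsf{pop}_{\mathsf{PIFO}}(p)=(i,p')$ and $\mathsf{pop}(\vec q[i])=(pkt,q')$; undefined otherwise. Size: $|\mathsf{Leaf}(p)|=|p|$, $|\mathsf{Internal}(\vec q,p)|=\sum_i|\vec q[i]|$. Well-formedness: $\vdash\mathsf{Leaf}(p)$ always; $\vdash\mathsf{Internal}(\vec q,p)$ iff for all $i$, $\vdash\vec q[i]$ and $|p|_i=|\vec q[i]|$. Words are written by juxtaposition; $\epsilon$ is the empty word, $\cdot$ concatenation. For a PIFO $p$, $\textsc{flush}(p)$ is the word obtained by popping $p$ until empty, last popped leftmost. $\mathsf{snap}(\mathsf{Leaf}(p))=[\textsc{flush}(p)]$, $\mathsf{snap}(\mathsf{Internal}(\vec q,p))=\mathsf{snap}(\vec q[1]) +\!\!+\cdots+\!\!+\mathsf{snap}(\vec q[n])$ (list concatenation). For well-formed $q$: $\mathsf{flush}(q)=\epsilon$ if $|q|=0$, and $\mathsf{flush}(q)=\mathsf{flush}(q')\cdot pkt$ if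 $|q|>0$ and $\mathsf{pop}(q)=(pkt,q')$. *)

From mathcomp Require Import all_boot all_order.
Set Implicit Arguments. Unset Strict Implicit. Unset Printing Implicit Defensive.
Import Order.TTheory.
Local Open Scope order_scope.

Inductive Topo : Type := Star | Node of seq Topo.

Fixpoint leaves (t : Topo) : nat :=
  match t with Star => 1 | Node ts => sumn (map leaves ts) end.

Section PIFOTrees.
Variable Pkt : Type.
Variables (d : Order.disp_t) (Rk : orderType d).

(* A PIFO over S: sequence of (element, rank) pairs in insertion order
   (head = earliest inserted). *)
Definition PIFO (S : Type) := seq (S * Rk).

(* pop: remove the entry of minimal rank, earliest-inserted among ties. *)
Definition pifo_pop (S : Type) (p : PIFO S) : option (S * PIFO S) :=
  match p with
  | [::] => None
  | e :: p' =>
      let m := foldl (fun r x => Order.min r x.2) e.2 p' in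
      let i := find (fun x => x.2 == m) p in
      Some ((nth e p i).1, take i p ++ drop i.+1 p)
  end.

Definition pifo_count (S : eqType) (p : PIFO S) (s : S) : nat :=
  count (fun x => x.1 == s) p.

(* FLUSH(p): pop until empty, last popped leftmost (word = seq, head = leftmost). *)
Fixpoint pifo_flush_fuel (S : Type) (n : nat) (p : PIFO S) : seq S :=
  match n with
  | 0 => [::]
  | n'.+1 => match pifo_pop p with
             | Some (x, p') => rcons (pifo_flush_fuel n' p') x
             | None => [::]
             end
  end.
Definition pifo_flush (S : Type) (p : PIFO S) : seq S := pifo_flush_fuel (size p) p.

(* Untyped PIFO trees; children indices of internal PIFOs are 0-based
   (index i refers to the (i+1)-th child). *)
Inductive PTree : Type :=
  | Leaf of PIFO Pkt
  | Internal of seq PTree & PIFO nat.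

Fixpoint has_topo (q : PTree) (t : Topo) {struct q} : bool :=
  match q, t with
  | Leaf _, Star => true
  | Internal qs p, Node ts =>
      [&& size qs == size ts, all (fun x => x.1 < size ts) p
        & all2 (fun a b => has_topo a b) qs ts]
  | _, _ => false
  end.

Fixpoint pop (q : PTree) : option (Pkt * PTree) :=
  match q with
  | Leaf p => match pifo_pop p with
              | Some (x, p') => Some (x, Leaf p')
              | None => None
              end
  | Internal qs p =>
      match pifo_pop p with
      | None => None
      | Some (i, p') =>
          let fix go (qs : seq PTree) (i : nat) : option (Pkt * seq PTree) :=
            match qs, i with
            | [::], _ => None
            | q0 :: qs', 0 => match pop q0 with
                              | Some (x, q') => Some (x, q' :: qs')
                              | None => None
                              end
            | q0 :: qs', j.+1 => match go qs' j with
                                 | Some (x, qs'') => Some (x, q0 :: qs'')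
                                 | None => None
                                 end
            end in
          match go qs i with
          | Some (x, qs') => Some (x, Internal qs' p')
          | None => None
          end
      end
  end.

Fixpoint tsize (q : PTree) : nat :=
  match q with
  | Leaf p => size p
  | Internal qs _ => sumn (map tsize qs)
  end.

Fixpoint wf (q : PTree) : bool :=
  match q with
  | Leaf _ => true
  | Internal qs p =>
      all wf qs &&
      all (fun i => pifo_count p i == tsize (nth (Leaf [::]) qs i)) (iota 0 (size qs))
  end.

Fixpoint snap (q : PTree) : seq (seq Pkt) :=
  match q with
  | Leaf p => [:: pifo_flush p]
  | Internal qs _ => flatten (map snap qs)
  end.

(* flush for well-formed q: each pop of a well-formed nonempty tree succeeds
   and decreases the size by one, so |q| pops empty the tree. *)
Fixpoint flush_fuel (n : nat) (q : PTree) : seq Pkt :=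
  match n with
  | 0 => [::]
  | n'.+1 => match pop q with
             | Some (x, q') => rcons (flush_fuel n' q') x
             | None => [::]
             end
  end.
Definition flush (q : PTree) : seq Pkt := flush_fuel (tsize q) q.

End PIFOTrees.

From Pilot Require Import Defs.
From mathcomp Require Import all_boot all_order.
Set Implicit Arguments. Unset Strict Implicit. Unset Printing Implicit Defensive.

(* Give every PIFO of the tree the same rank, so that every pop is first-in
   first-out.  Label the leaves of t by pkt_1, ..., pkt_n from left to right
   and enqueue pi(pkt_1), ..., pi(pkt_n) in this order: each packet is stored
   at its leaf, and each internal PIFO on the way records, in arrival order,
   the child through which the packet went.  Every leaf then holds exactly one
   packet.  A FIFO pop at an internal node selects the child of its oldest
   packet, which in turn pops that same packet, so the tree pops the packets
   in arrival order and the flush (last pop leftmost) is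
   pi(pkt_n) ... pi(pkt_1). *)

Section Blocks.
Variable T : eqType.
Implicit Types (ss : seq (seq T)) (o : seq T).

Definition block_index ss (y : T) : nat := find (fun c => y \in c) ss.

Lemma block_index_lt ss y : y \in flatten ss -> block_index ss y < size ss.
Proof. by move=> /flattenP[c ssc yc]; rewrite -has_find; apply/hasP; exists c. Qed.

Lemma mem_nth_block ss i y : uniq (flatten ss) ->
  (y \in nth [::] ss i) = (y \in flatten ss) && (block_index ss y == i).
Proof.
rewrite /block_index; elim: ss i => [|c ss IH] i /=; first by rewrite nth_nil.
rewrite cat_uniq mem_cat => /and3P[_ /hasPn disj uss].
case: i => [|i] /=; case yc: (y \in c) => //=; rewrite ?andbF ?eqSS ?IH //.
by apply/negbTE/negP => /andP[/disj]; rewrite yc.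
Qed.

Lemma count_mem_flatten ss o : uniq (flatten ss) ->
  count (mem (flatten ss)) o = sumn [seq count (mem c) o | c <- ss].
Proof.
elim: ss => [|c ss IH] /=; first by rewrite count_pred0.
rewrite cat_uniq => /and3P[_ /hasPn disj /IH <-].
have disj_c : count (predI (mem c) (mem (flatten ss))) o = 0.
  rewrite (eq_count (a2 := pred0)) ?count_pred0 // => y /=.
  by case y_ss: (y \in flatten ss); rewrite ?andbF // (negbTE (disj y y_ss)).
rewrite -count_predUI disj_c addn0; apply: eq_count => y.
by rewrite /= mem_cat.
Qed.

End Blocks.

Lemma uniq_nth_reshape (T : eqType) sh (s : seq T) i :
  uniq s -> uniq (nth [::] (reshape sh s) i).
Proof. by rewrite nth_reshape => /drop_uniq/take_uniq. Qed.

Lemma mem_nth_reshape (T : eqType) sh (s : seq T) i y :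
  y \in nth [::] (reshape sh s) i -> y \in s.
Proof. by rewrite nth_reshape => /mem_take/mem_drop. Qed.

Lemma size_nth_reshape (T : Type) sh (s : seq T) i : size s = sumn sh ->
  i < size sh -> size (nth [::] (reshape sh s) i) = nth 0 sh i.
Proof.
move=> s_sh i_sh; rewrite -(nth_map _ 0) ?size_reshape //.
by rewrite -/(shape _) reshapeKl // s_sh.
Qed.

Lemma set_nth_mkseq (T : Type) (x0 : T) (f g : nat -> T) n k : k < n ->
  (forall j, j < n -> j != k -> f j = g j) ->
  set_nth x0 (mkseq f n) k (g k) = mkseq g n.
Proof.
move=> lt_k_n fg; apply: (@eq_from_nth _ x0) => [|j].
  by rewrite size_set_nth !size_mkseq; apply/maxn_idPr.
rewrite size_set_nth size_mkseq (maxn_idPr lt_k_n) => lt_j_n.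
rewrite nth_set_nth /= !nth_mkseq //; case: eqP => [-> //|/eqP].
exact: fg.
Qed.

Local Notation blocks ts s := (reshape (map leaves ts) s).

Lemma flatten_blocks (T : Type) ts (s : seq T) :
  size s = sumn (map leaves ts) -> flatten (blocks ts s) = s.
Proof. by move=> s_ts; rewrite reshapeKr // s_ts. Qed.

Lemma size_nth_blocks (T : Type) ts (s : seq T) i :
  size s = sumn (map leaves ts) -> i < size ts ->
  size (nth [::] (blocks ts s) i) = leaves (nth Star ts i).
Proof.
by move=> s_ts lt_i; rewrite size_nth_reshape ?size_map // (nth_map Star).
Qed.

Lemma block_index_blocks_lt (T : eqType) ts (s : seq T) y :
  size s = sumn (map leaves ts) -> y \in s ->
  block_index (blocks ts s) y < size ts.
Proof.
move=> s_ts y_s; rewrite -(size_map leaves) -(size_reshape _ s).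
by rewrite block_index_lt ?flatten_blocks.
Qed.

Fixpoint map_blocks (T R : Type) (f : Topo -> seq T -> R) ts (s : seq T) : seq R :=
  if ts is t :: ts' then
    f t (take (leaves t) s) :: map_blocks f ts' (drop (leaves t) s)
  else [::].

Lemma map_blocksE (T R : Type) (f : Topo -> seq T -> R) ts (s : seq T) :
  map_blocks f ts s =
  mkseq (fun i => f (nth Star ts i) (nth [::] (blocks ts s) i)) (size ts).
Proof.
elim: ts s => [|t ts IH] s //=.
by rewrite IH /mkseq /= -[1]/(1 + 0) iotaDl -map_comp.
Qed.

Lemma Topo_nth_ind (P : Topo -> Prop) : P Star ->
  (forall ts, (forall i, P (nth Star ts i)) -> P (Node ts)) -> forall t, P t.
Proof.
move=> PStar PNode; fix IH 1 => -[|ts]; first exact: PStar.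
apply: PNode; elim: ts => [|t ts IHts] [|i];
  [exact: PStar | exact: PStar | exact: IH | exact: IHts].
Qed.

Lemma labelling_ind (T : Type) (P : Topo -> seq T -> Prop) :
  (forall x, P Star [:: x]) ->
  (forall ts s, size s = sumn (map leaves ts) ->
     (forall i, i < size ts -> P (nth Star ts i) (nth [::] (blocks ts s) i)) ->
   P (Node ts) s) ->
  forall t s, size s = leaves t -> P t s.
Proof.
move=> PStar PNode; elim/Topo_nth_ind => [|ts IH] s /= s_ts.
  by case: s s_ts => [|x []] // _; apply: PStar.
by apply: PNode => // i lt_i_ts; apply/IH/size_nth_blocks.
Qed.

Section Fifo.
Variables (d : Order.disp_t) (Rk : orderType d) (r0 : Rk).

Definition fifo (S : Type) (xs : seq S) : PIFO Rk S := [seq (x, r0) | x <- xs].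

Lemma pifo_pop_fifo (S : Type) (x : S) xs :
  pifo_pop (fifo (x :: xs)) = Some (x, fifo xs).
Proof.
rewrite /pifo_pop /=; set m := foldl _ r0 _.
have -> : m = r0.
  by rewrite {}/m; elim: xs => //= y xs; rewrite Order.POrderTheory.minxx.
by rewrite eqxx /= drop0.
Qed.

Lemma pifo_flush_fifo (S : Type) (xs : seq S) : pifo_flush (fifo xs) = rev xs.
Proof.
have flushS n (p : PIFO Rk S) : pifo_flush_fuel n.+1 p =
    if pifo_pop p is Some (y, p') then rcons (pifo_flush_fuel n p') y else [::].
  by [].
rewrite /pifo_flush size_map; elim: xs => // x xs IH.
by rewrite flushS pifo_pop_fifo IH rev_cons.
Qed.

Lemma pifo_count_fifo (S : eqType) (xs : seq S) i :
  pifo_count (fifo xs) i = count_mem i xs.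
Proof. exact: count_map. Qed.

End Fifo.

Section Pop.
Variables (Pkt : Type) (d : Order.disp_t) (Rk : orderType d).
Local Notation tree := (PTree Pkt Rk).
Implicit Types (q : tree) (qs : seq tree) (p : PIFO Rk nat).

(* The [let fix] inside [pop], named so that it can be folded. *)
Fixpoint pop_child qs (i : nat) : option (Pkt * seq tree) :=
  match qs, i with
  | [::], _ => None
  | q :: qs', 0 => if pop q is Some (x, q') then Some (x, q' :: qs') else None
  | q :: qs', j.+1 =>
      if pop_child qs' j is Some (x, qs'') then Some (x, q :: qs'') else None
  end.

Lemma pop_childE qs i x q : pop (nth (Leaf [::]) qs i) = Some (x, q) ->
  i < size qs -> pop_child qs i = Some (x, set_nth (Leaf [::]) qs i q).
Proof.
elim: qs i => [|q0 qs IH] [|i] //=; first by move=> ->.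
by move=> /IH pop_i /pop_i ->.
Qed.

Lemma pop_Internal qs p i p' x q : pifo_pop p = Some (i, p') ->
  i < size qs -> pop (nth (Leaf [::]) qs i) = Some (x, q) ->
  pop (Internal qs p) = Some (x, Internal (set_nth (Leaf [::]) qs i q) p').
Proof.
move=> pop_p lt_i_qs pop_qi.
by rewrite /= pop_p -/(pop_child qs i) (pop_childE pop_qi lt_i_qs).
Qed.

End Pop.

Section Build.
Variables (Pkt : eqType) (d : Order.disp_t) (Rk : orderType d) (r0 : Rk).
Implicit Types (s o : seq Pkt) (ts : seq Topo).

(* [build t s o]: the leaves of t are labelled by s, from left to right, and
   the packets of o that occur in s have been enqueued in the order of o,
   all with rank r0. *)
Fixpoint build (t : Topo) s o : PTree Pkt Rk :=
  match t with
  | Star => Leaf (fifo r0 [seq y <- o | y \in s])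
  | Node ts =>
      Internal (map_blocks (fun t' s' => build t' s' o) ts s)
               (fifo r0 [seq block_index (blocks ts s) y | y <- o & y \in s])
  end.

Lemma build_Node ts s o :
  build (Node ts) s o =
  Internal (mkseq (fun i => build (nth Star ts i) (nth [::] (blocks ts s) i) o)
                  (size ts))
           (fifo r0 [seq block_index (blocks ts s) y | y <- o & y \in s]).
Proof. by rewrite /= map_blocksE. Qed.

Lemma build_notin t s o x : x \notin s -> build t s (x :: o) = build t s o.
Proof.
elim/Topo_nth_ind: t s => [|ts IH] s x_s; first by rewrite /= (negbTE x_s).
rewrite !build_Node /= (negbTE x_s); congr Internal; apply: eq_mkseq => i.
by apply: IH; apply: contra x_s; apply: mem_nth_reshape.
Qed.

Lemma pop_build t s o x : size s = leaves t -> uniq s -> x \in s ->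
  pop (build t s (x :: o)) = Some (x, build t s o).
Proof.
move: t s; apply: labelling_ind => [y | ts s s_ts IH] u_s x_s.
  by rewrite /= x_s pifo_pop_fifo.
rewrite !build_Node [filter _ (x :: o)]/= x_s map_cons.
set ss := blocks ts s; set k := block_index ss x.
have lt_k : k < size ts by exact: block_index_blocks_lt.
have mem_ss j : (x \in nth [::] ss j) = (j == k).
  by rewrite mem_nth_block flatten_blocks // x_s eq_sym.
set child := fun j => build (nth Star ts j) (nth [::] ss j) o.
rewrite (pop_Internal (pifo_pop_fifo _ _ _) _ (x := x) (q := child k))
  ?size_mkseq //.
  rewrite set_nth_mkseq // => j _ ne_jk.
  by apply: build_notin; rewrite mem_ss.
by rewrite nth_mkseq // IH ?uniq_nth_reshape ?mem_ss.
Qed.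

Lemma tsize_build t s o : size s = leaves t -> uniq s ->
  Defs.tsize (build t s o) = count (mem s) o.
Proof.
move: t s; apply: labelling_ind => [y | ts s s_ts IH] u_s.
  by rewrite /= size_map size_filter.
set ss := blocks ts s; have flat_ss : flatten ss = s by exact: flatten_blocks.
rewrite build_Node /= -{2}flat_ss count_mem_flatten ?flat_ss //.
rewrite -[ss in RHS](mkseq_nth [::]) size_reshape size_map /mkseq -!map_comp.
congr sumn; apply/eq_in_map => i; rewrite mem_iota => /andP[_ lt_i] /=.
by rewrite IH ?uniq_nth_reshape.
Qed.

Lemma flush_build t s o : size s = leaves t -> uniq s -> {subset o <= s} ->
  flush (build t s o) = rev o.
Proof.
move=> s_t u_s o_s; rewrite /flush tsize_build //.
have -> : count (mem s) o = size o by apply/eqP; rewrite -all_count; apply/allP.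
elim: o o_s => //= x o IH xo_s.
rewrite pop_build ?xo_s ?mem_head // IH ?rev_cons // => y o_y.
by rewrite xo_s // inE o_y orbT.
Qed.

Lemma wf_build t s o : size s = leaves t -> uniq s -> wf (build t s o).
Proof.
move: t s; apply: labelling_ind => // ts s s_ts IH u_s.
rewrite build_Node /= size_mkseq; apply/andP; split.
  rewrite all_map; apply/allP => i; rewrite mem_iota => /andP[_ lt_i] /=.
  by rewrite IH ?uniq_nth_reshape.
apply/allP => i; rewrite mem_iota => /andP[_ lt_i].
rewrite nth_mkseq // tsize_build ?uniq_nth_reshape ?size_nth_blocks //.
rewrite pifo_count_fifo count_map count_filter; apply/eqP/eq_count => y /=.
by rewrite mem_nth_block flatten_blocks // andbC.
Qed.

Lemma has_topo_build t s o : size s = leaves t -> has_topo (build t s o) t.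
Proof.
move: t s; apply: labelling_ind => // ts s s_ts IH.
rewrite build_Node /= size_mkseq eqxx /=; apply/andP; split.
  rewrite !all_map; apply/allP => y; rewrite mem_filter => /andP[y_s _].
  exact: block_index_blocks_lt.
rewrite all2E size_mkseq eqxx -[X in zip _ X](mkseq_nth Star) zip_map all_map.
by apply/allP => i; rewrite mem_iota => /andP[_ lt_i]; apply: IH.
Qed.

Lemma snap_build t s o : size s = leaves t -> uniq s -> uniq o ->
  {subset s <= o} -> snap (build t s o) = [seq [:: x] | x <- s].
Proof.
move: t s; apply: labelling_ind => [y | ts s s_ts IH] u_s u_o s_o.
  rewrite /= pifo_flush_fifo (eq_filter (a2 := pred1 y)) => [|z]; last first.
    by rewrite inE.
  by rewrite filter_pred1_uniq ?s_o ?mem_head.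
set ss := blocks ts s; have flat_ss : flatten ss = s by exact: flatten_blocks.
rewrite build_Node /= -{2}flat_ss map_flatten -[ss in RHS](mkseq_nth [::]).
rewrite size_reshape size_map /mkseq -!map_comp; congr flatten.
apply/eq_in_map => i; rewrite mem_iota => /andP[_ lt_i] /=.
by rewrite IH ?uniq_nth_reshape // => y /mem_nth_reshape /s_o.
Qed.

End Build.

Theorem lemma4p8 (Pkt : eqType) (d : Order.disp_t) (Rk : orderType d) (r0 : Rk)
    (t : Topo) (pkts : seq Pkt) :
  uniq pkts -> size pkts = leaves t ->
  forall pi : Pkt -> Pkt,
    {in pkts, forall x, pi x \in pkts} -> {in pkts &, injective pi} ->
  exists q : PTree Pkt Rk,
    [/\ has_topo q t, wf q,
        flush q = rev (map pi pkts)
      & snap q = map (fun x => [:: x]) pkts].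
Proof.
move=> u_pkts pkts_t pi pi_pkts pi_inj; set o := map pi pkts.
have u_o : uniq o by rewrite map_inj_in_uniq.
have o_pkts : {subset o <= pkts} by move=> _ /mapP[x x_pkts ->]; apply: pi_pkts.
have [_ eq_o] := uniq_min_size u_o o_pkts (eq_leq (esym (size_map pi pkts))).
exists (build r0 t pkts o); split.
- exact: has_topo_build.
- exact: wf_build.
- exact: flush_build.
- by apply: snap_build => // x; rewrite eq_o.
Qed.
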